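(* Let $G=(V,E)$ be a biconnected geodetic graph containing a clique $C\subseteq V$. Then either $G$ is complete, or every vertex $u\in C$ has a neighbour $x_u\notin C$ such that $\{x_u\mid u\in C\}$ is an independent set of size $|C|$.
   Context: All graphs are finite, simple and undirected. A graph is geodetic if between any two vertices there is at most one shortest path. $G$ is biconnected if it is connected and for every $v\in V$ the subgraph induced by $V\setminus\{v\}$ is connected. *)

(* A finite simple graph is a symmetric irreflexive
   relation e : rel T on a finType T (vertex set V = T). *)
From mathcomp Require Import all_boot.
Set Implicit Arguments. Unset Strict Implicit. Unset Printing Implicit Defensive.

Section Graphs.
Variable T : finType.
Variable e : rel T.

Definition simple_graph : Prop := symmetric e /\ irreflexive e.

(* A walk from x to y: the vertex sequence x :: p, consecutive vertices
   adjacent, ending at y. Its length is size p. *)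
Definition walk (x y : T) (p : seq T) : bool := path e x p && (last x p == y).

(* A shortest path from x to y: a walk of minimum length among all walks
   from x to y (such a walk is automatically a path). *)
Definition shortest_path (x y : T) (p : seq T) : Prop :=
  walk x y p /\ forall q, walk x y q -> size p <= size q.

Definition geodetic : Prop :=
  forall x y p q, shortest_path x y p -> shortest_path x y q -> p = q.

Definition connected : Prop := forall x y : T, connect e x y.

Definition del_vertex (v : T) : rel T := [rel a b | [&& e a b, a != v & b != v]].

Definition biconnected : Prop :=
  connected /\ forall v x y, x != v -> y != v -> connect (del_vertex v) x y.

Definition clique (C : {set T}) : Prop :=
  forall u w, u \in C -> w \in C -> u != w -> e u w.

Definition complete : Prop := forall u w : T, u != w -> e u w.

Definition independent (S : {set T}) : Prop :=
  forall a b, a \in S -> b \in S -> ~~ e a b.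
End Graphs.

From mathcomp Require Import all_boot zify.
Set Implicit Arguments. Unset Strict Implicit. Unset Printing Implicit Defensive.

(* Extend C to a maximal clique D.  A vertex y outside D is adjacent to at
   most one vertex of D: for neighbours a <> b of y in D and a vertex c of D
   not adjacent to y, c a y and c b y would be two shortest paths.  Likewise
   outside neighbours of distinct vertices of D are never adjacent, so any
   choice of outside neighbours x_u is injective with independent image.
   It remains to find an outside neighbour of every u in D when D <> V.  If
   all neighbours of u lie in D, every vertex v has a unique nearest vertex
   proj v in D, the other vertices of D being one step further (otherwise u
   would have two first steps towards v).  The projection is constant along
   every edge not inside D, so for w outside D and c = proj w, the property
   "projects to c" is invariant along the edges of G - c; but u does not have
   it and w does, contradicting biconnectivity. *)

Section Distance.
Variables (T : finType) (e : rel T).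
Hypothesis conn : connected e.

Lemma walk_cons x a y p : e x a -> walk e x y (a :: p) = walk e a y p.
Proof. by move=> xa; rewrite /walk /= xa. Qed.

Lemma exists_walk_size x y : exists n, [exists t : n.-tuple T, walk e x y t].
Proof.
have /connectP [p xp ->] := conn x y.
by exists (size p); apply/existsP; exists (in_tuple p); rewrite /walk xp eqxx.
Qed.

Definition dist x y := ex_minn (exists_walk_size x y).

Lemma dist_le_size x y p : walk e x y p -> dist x y <= size p.
Proof.
move=> xyp; rewrite /dist; case: ex_minnP => n _; apply.
by apply/existsP; exists (in_tuple p).
Qed.

Lemma dist_walk x y : exists2 p, walk e x y p & size p = dist x y.
Proof.
by rewrite /dist; case: ex_minnP => n /existsP [t xyt] _; exists t; rewrite ?size_tuple.
Qed.

Lemma shortest_path_dist x y p :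
  walk e x y p -> size p = dist x y -> shortest_path e x y p.
Proof. by move=> xyp sp; split=> // q; rewrite sp; apply: dist_le_size. Qed.

Lemma dist_eq0 x y : (dist x y == 0) = (x == y).
Proof.
apply/eqP/eqP => [xy0|<-]; last first.
  by apply/eqP; rewrite -leqn0 (dist_le_size (p := [::])) ?/walk //= eqxx.
have [[|? ?] /andP[_ /eqP //] ] := dist_walk x y.
by rewrite xy0.
Qed.

Lemma dist_le_succ_l x b y : e x b -> dist x y <= (dist b y).+1.
Proof.
move=> xb; have [p byp <-] := dist_walk b y.
by apply: (dist_le_size (p := b :: p)); rewrite walk_cons.
Qed.

Lemma dist_le_succ_r x y z : e y z -> dist x z <= (dist x y).+1.
Proof.
move=> yz; have [p /andP[xp /eqP yp] <-] := dist_walk x y.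
rewrite -(size_rcons p z); apply: dist_le_size.
by rewrite /walk rcons_path xp yp yz last_rcons eqxx.
Qed.

Lemma dist_step x y n : dist x y = n.+1 -> exists2 b, e x b & dist b y = n.
Proof.
move=> xy; have [[|b p] xyp] := dist_walk x y; rewrite xy // => -[sp].
have xb : e x b by case/andP: xyp => /andP[].
exists b => //; rewrite walk_cons // in xyp.
by have := dist_le_size xyp; have := dist_le_succ_l y xb; lia.
Qed.

Hypothesis irr : irreflexive e.

Lemma dist_eq1 x y : (dist x y == 1) = e x y.
Proof.
apply/eqP/idP => [xy1|xy].
  have [[|z [|? ?]] xyp] := dist_walk x y; rewrite xy1 // => _.
  by move: xyp; rewrite /walk /= andbT => /andP[xz /eqP <-].
have : dist x y <= 1 by apply: (dist_le_size (p := [:: y])); rewrite /walk /= xy eqxx.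
have : dist x y != 0 by rewrite dist_eq0; apply: contraTneq xy => ->; rewrite irr.
lia.
Qed.

Lemma dist_eq2 x m y : x != y -> ~~ e x y -> e x m -> e m y -> dist x y = 2.
Proof.
move=> xNy xy xm my; rewrite -dist_eq0 in xNy; rewrite -dist_eq1 in xy.
have : dist x y <= 2 by apply: (dist_le_size (p := [:: m; y])); rewrite /walk /= xm my eqxx.
lia.
Qed.

Hypothesis geo : geodetic e.

Lemma geodetic_first_step z a b w : e z a -> e z b ->
  dist a w = dist b w -> dist z w = (dist a w).+1 -> a = b.
Proof.
move=> za zb ab zw.
have [p awp ap] := dist_walk a w; have [q bwq bq] := dist_walk b w.
have zap : shortest_path e z w (a :: p) by apply: shortest_path_dist; rewrite ?walk_cons //= ap.
have zbq : shortest_path e z w (b :: q) by apply: shortest_path_dist; rewrite ?walk_cons //= bq -ab.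
by case: (geo zap zbq).
Qed.

End Distance.

Section GeodeticClique.
Variables (T : finType) (e : rel T).
Hypotheses (sym : symmetric e) (irr : irreflexive e) (conn : connected e).
Hypothesis bic : forall v x y, x != v -> y != v -> connect (del_vertex e v) x y.
Hypothesis geo : geodetic e.
Variable D : {set T}.
Hypothesis clD : clique e D.

Local Notation dist := (dist conn).

Lemma clique_first_step z a b w : z \in D -> a \in D -> b \in D ->
  dist a w = dist b w -> dist z w = (dist a w).+1 -> a = b.
Proof.
move=> zD aD bD ab za.
have zNa : z != a by apply/eqP => zEa; rewrite zEa in za; lia.
have zNb : z != b by apply/eqP => zEb; rewrite zEb -ab in za; lia.
exact: (geodetic_first_step geo (clD zD aD zNa) (clD zD bD zNb) ab za).
Qed.

Section SealedVertex.
Variable u : T.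
Hypotheses (uD : u \in D) (u_sealed : forall y, e u y -> y \in D).

Definition proj v := [arg min_(c < u in D) dist c v].

Lemma proj_in v : proj v \in D.
Proof. by rewrite /proj; case: (arg_minnP (fun c => dist c v) uD). Qed.

Lemma dist_proj_min v c : c \in D -> dist (proj v) v <= dist c v.
Proof. by rewrite /proj; case: (arg_minnP (fun c => dist c v) uD) => p _; apply. Qed.

Lemma proj_id v : v \in D -> proj v = v.
Proof.
move=> vD; apply/eqP; rewrite -(dist_eq0 conn) -leqn0.
by apply: leq_trans (dist_proj_min v vD) _; rewrite leqn0 dist_eq0.
Qed.

Lemma dist_sealed v : v \notin D -> dist u v = (dist (proj v) v).+1.
Proof.
move=> vND; have : dist u v != 0 by rewrite dist_eq0; apply: contraNneq vND => <-.
case duv: (dist u v) => [//|n] _.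
have [u' uu' u'v] := dist_step duv.
have le_n := dist_proj_min v (u_sealed uu'); rewrite u'v in le_n.
have [uEp|uNp] := eqVneq u (proj v); first by rewrite -uEp duv in le_n; lia.
by have := dist_le_succ_l conn v (clD uD (proj_in v) uNp); rewrite duv; lia.
Qed.

Lemma proj_unique v c : c \in D -> dist c v = dist (proj v) v -> c = proj v.
Proof.
move=> cD cv; have [vD|vND] := boolP (v \in D).
  have : dist c v == 0 by rewrite cv (proj_id vD) dist_eq0.
  by rewrite dist_eq0 (proj_id vD) => /eqP.
by apply: (clique_first_step uD cD (proj_in v) cv); rewrite cv dist_sealed.
Qed.

Lemma dist_proj v c : c \in D -> dist c v = dist (proj v) v + (c != proj v).
Proof.
move=> cD; have [->|cNp] := eqVneq c (proj v); first by rewrite addn0.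
have := dist_proj_min v cD; have := dist_le_succ_l conn v (clD cD (proj_in v) cNp).
have : dist c v != dist (proj v) v by apply: contra_neq cNp; apply: proj_unique.
by rewrite addn1; lia.
Qed.

Lemma proj_edge v1 v2 : e v1 v2 -> proj v1 != proj v2 -> v1 = proj v1.
Proof.
move=> v12 pN; set c1 := proj v1; set c2 := proj v2.
have d21 : dist c2 v1 = (dist c1 v1).+1 by rewrite dist_proj ?proj_in // eq_sym pN addn1.
have d12 : dist c1 v2 = (dist c2 v2).+1 by rewrite dist_proj ?proj_in // pN addn1.
have v21 : e v2 v1 by rewrite sym.
have t21 := dist_le_succ_r conn c2 v21.
have t12 := dist_le_succ_r conn c1 v12.
case dv1: (dist c1 v1) => [|n]; first by apply/esym/eqP; rewrite -(dist_eq0 conn) dv1.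
have [b c1b bv1] := dist_step dv1.
have tb := dist_le_succ_r conn b v12; have tc1 := dist_le_succ_l conn v2 c1b.
have c2Eb : c2 = b.
  have c12 : e c1 c2 := clD (proj_in v1) (proj_in v2) pN.
  by apply: (geodetic_first_step (w := v2) geo c12 c1b); lia.
by move: d21; rewrite c2Eb bv1 dv1; lia.
Qed.

Lemma sealed_clique_spans w : w \in D.
Proof.
apply: contraT => wND; set c := proj w.
have uNc : u != c by apply/eqP => uEc; have := dist_sealed wND; rewrite -/c -uEc; lia.
have wNc : w != c by apply: contraNneq wND => ->; apply: proj_in.
have proj_closed : closed (del_vertex e c) [pred v | proj v == c].
  move=> v1 v2 /and3P[v12 v1Nc v2Nc]; rewrite !inE.
  have [-> //|pN] := eqVneq (proj v1) (proj v2).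
  have v21 : e v2 v1 by rewrite sym.
  rewrite -(proj_edge v12 pN) -(proj_edge v21 _) ?(negbTE v1Nc) ?(negbTE v2Nc) //.
  by rewrite eq_sym.
have := closed_connect proj_closed (bic uNc wNc).
by rewrite !inE proj_id // (negbTE uNc) eqxx.
Qed.

End SealedVertex.

Lemma maximal_clique_out_neighbour u w : u \in D -> w \notin D ->
  exists y, e u y && (y \notin D).
Proof.
move=> uD wND; apply/existsP; apply: contraNT wND => /existsPn u_sealed.
apply: (sealed_clique_spans uD) => y uy.
by have := u_sealed y; rewrite uy negbK.
Qed.

Hypothesis maxD : forall y, y \notin D -> exists2 c, c \in D & ~~ e c y.

Lemma outside_adj_unique y a b : y \notin D -> a \in D -> b \in D ->
  e a y -> e b y -> a = b.
Proof.
move=> yND aD bD ay By; have [c cD cy] := maxD yND.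
have cNa : c != a by apply: contraNneq cy => ->.
have cNy : c != y by apply: contraNneq yND => <-.
have ay1 : dist a y = 1 by apply/eqP; rewrite dist_eq1.
have By1 : dist b y = 1 by apply/eqP; rewrite dist_eq1.
apply: (clique_first_step cD aD bD (etrans ay1 (esym By1))).
by rewrite ay1; apply: dist_eq2 cNy cy (clD cD aD cNa) ay.
Qed.

Lemma outside_neighbours_nonadj u v a b : u \in D -> v \in D -> u != v ->
  e u a -> e v b -> a \notin D -> b \notin D -> ~~ e a b.
Proof.
move=> uD vD uNv ua vb aND bND; apply/negP => ab.
have ub : ~~ e u b.
  by apply: contra uNv => ub; apply/eqP; apply: outside_adj_unique bND uD vD ub vb.
have uNb : u != b by apply: contraNneq bND => <-.
have ab1 : dist a b = 1 by apply/eqP; rewrite dist_eq1.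
have vb1 : dist v b = 1 by apply/eqP; rewrite dist_eq1.
have aEv : a = v.
  apply: (geodetic_first_step geo ua (clD uD vD uNv) (etrans ab1 (esym vb1))).
  by rewrite ab1; apply: dist_eq2 uNb ub ua ab.
by move: aND; rewrite aEv vD.
Qed.

Lemma maximal_clique_outside_matching w : w \notin D -> exists x : T -> T,
  [/\ forall u, u \in D -> e u (x u) && (x u \notin D),
      {in D &, injective x} &
      forall u v, u \in D -> v \in D -> ~~ e (x u) (x v)].
Proof.
move=> wND; pose x u := odflt u [pick y | e u y && (y \notin D)].
have xD u : u \in D -> e u (x u) && (x u \notin D).
  move=> uD; rewrite /x; case: pickP => [y //|none].
  by have [y] := maximal_clique_out_neighbour uD wND; rewrite none.
exists x; split=> // u v uD vD.
  have /andP[ux xuND] := xD u uD; have /andP[vx _] := xD v vD.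
  by move=> xuv; apply: (outside_adj_unique xuND uD vD ux); rewrite xuv.
have [<-|uNv] := eqVneq u v; first by rewrite irr.
have /andP[ux xuND] := xD u uD; have /andP[vx xvND] := xD v vD.
exact: outside_neighbours_nonadj uD vD uNv ux vx xuND xvND.
Qed.

End GeodeticClique.

Lemma maximal_clique_exists (T : finType) (e : rel T) (C : {set T}) :
  symmetric e -> clique e C ->
  exists2 D : {set T}, C \subset D &
    clique e D /\ forall y, y \notin D -> exists2 c, c \in D & ~~ e c y.
Proof.
move=> sym clC.
pose cliqueb (D : {set T}) := [forall u in D, forall w in D, (u != w) ==> e u w].
have cliqueP D : reflect (clique e D) (cliqueb D).
  apply: (iffP forall_inP) => [cl u w uD wD uNw | cl u uD].
    by have /forall_inP/(_ w wD)/implyP := cl u uD; apply.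
  by apply/forall_inP => w wD; apply/implyP; apply: cl.
have [D /maxsetP[/cliqueP clD maxD] CD] := maxset_exists (introT (cliqueP C) clC).
exists D => //; split=> // y yND.
have [/exists_inP //|/exists_inPn yD_adj] := boolP [exists c in D, ~~ e c y].
have : cliqueb (y |: D).
  apply/cliqueP => a b; rewrite !in_setU1 => /predU1P[-> | aD] /predU1P[-> | bD] aNb.
  - by rewrite eqxx in aNb.
  - by rewrite sym; apply/negPn/yD_adj.
  - by apply/negPn/yD_adj.
  - exact: clD.
by move/maxD/(_ (subsetUr _ _)) => yDD; move: yND; rewrite -yDD setU11.
Qed.

Theorem proposition2 (T : finType) (e : rel T) (C : {set T}) :
  simple_graph e -> biconnected e -> geodetic e -> clique e C ->
  complete e \/
  exists x : T -> T,
    (forall u, u \in C -> e u (x u) /\ x u \notin C) /\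
    independent e (x @: C) /\ #|x @: C| = #|C|.
Proof.
move=> [sym irr] [conn bic] geo clC.
have [D CD [clD maxD]] := maximal_clique_exists sym clC.
have [/subsetP allD|/subsetPn[w _ wND]] := boolP ([set: T] \subset D).
  by left=> a b; apply: clD; apply: allD; rewrite in_setT.
right; have [x [xD xinj xind]] :=
  maximal_clique_outside_matching sym irr conn bic geo clD maxD wND.
have /subsetP CsubD := CD.
exists x; split; [|split].
- move=> u /CsubD /xD /andP[ux xuND]; split=> //.
  by apply: contra xuND; apply: CsubD.
- by move=> _ _ /imsetP[u /CsubD uD ->] /imsetP[v /CsubD vD ->]; apply: xind.
- by apply: card_in_imset; apply: sub_in2 xinj.
Qed.
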